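(* Let $f:\mathcal{X}\to\Delta^{k-1}$ be a classifier outputting confidence vectors, let $x^{(1)},\dots,x^{(n)}\in\mathcal{X}$, let $f_\# P(c)=\frac1n\sum_{i=1}^n\delta_{f(x^{(i)})}$, and let $P_{\mathrm{pseudo}}(y)=\frac1n\sum_{i=1}^n\delta_{y^{(i)}}$ where $y^{(i)}$ is the one-hot vector with $y^{(i)}_j=\mathbb{1}[j=\arg\max_{j'}f_{j'}(x^{(i)})]$. Then for every probability distribution $P'(y)$ supported on the set of one-hot vectors $\{0,1\}^k\cap\Delta^{k-1}$, $$W_\infty\bigl(f_\# P(c),P'(y)\bigr)\ \ge\ W_\infty\bigl(f_\# P(c),P_{\mathrm{pseudo}}(y)\bigr).$$
   Context: $\Delta^{k-1}=\{c\in\mathbb{R}^k: c_j\ge 0,\ \sum_j c_j=1\}$. For probability distributions $P,Q$ on $\mathbb{R}^k$, $W_\infty(P,Q)=\inf_{\pi\in\Pi(P,Q)}\int\|u-v\|_\infty\,d\pi(u,v)$ over couplings $\pi$ of $P$ and $Q$ (optimal transport distance with ground cost $\|u-v\|_\infty$). Ties in $\arg\max$ are broken by a fixed rule (e.g. smallest index). *)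

From mathcomp Require Import all_boot all_order all_algebra.
From mathcomp Require Import boolp classical_sets reals.
Set Implicit Arguments. Unset Strict Implicit. Unset Printing Implicit Defensive.
Import Order.TTheory GRing.Theory Num.Theory.
Local Open Scope ring_scope.

Section Defs.
Variables (R : realType) (k : nat).

Definition pt := 'rV[R]_k.

Definition supnorm (u : pt) : R := \big[Num.max/0]_(j < k) `|u ord0 j|.

Definition in_simplex (c : pt) : Prop :=
  (forall j, 0 <= c ord0 j) /\ \sum_(j < k) c ord0 j = 1.

Definition onehot (y : pt) : Prop :=
  (forall j, y ord0 j = 0 \/ y ord0 j = 1) /\ \sum_(j < k) y ord0 j = 1.

(* one-hot encoding of argmax_j c_j, ties broken by the smallest index *)
Definition is_argmax (c : pt) (j : 'I_k) : bool :=
  [forall j' : 'I_k, c ord0 j' <= c ord0 j] &&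
  [forall j' : 'I_k, (j' < j)%N ==> (c ord0 j' < c ord0 j)].
Definition pseudo_label (c : pt) : pt :=
  \row_(j < k) (if is_argmax c j then 1 else 0).

(* A finitely supported measure  sum_a a.1 * delta_{a.2}  on a type T,
   represented by a finite list of (weight, atom). *)
Definition mass {T : eqType} (L : seq (R * T)) (z : T) : R :=
  \sum_(a <- L | a.2 == z) a.1.
Definition is_prob {T : eqType} (L : seq (R * T)) : Prop :=
  (forall a, a \in L -> 0 <= a.1) /\ \sum_(a <- L) a.1 = 1.

(* couplings of P and Q (discrete, since P and Q are finitely supported) *)
Definition coupling (P Q : seq (R * pt)) (pi : seq (R * (pt * pt))) : Prop :=
  (forall a, a \in pi -> 0 <= a.1) /\
  (forall z, \sum_(a <- pi | a.2.1 == z) a.1 = mass P z) /\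
  (forall z, \sum_(a <- pi | a.2.2 == z) a.1 = mass Q z).

Definition cost (pi : seq (R * (pt * pt))) : R :=
  \sum_(a <- pi) a.1 * supnorm (a.2.1 - a.2.2).

Definition Winf (P Q : seq (R * pt)) : R :=
  inf [set c | exists pi, coupling P Q pi /\ c = cost pi].

Definition empirical (n : nat) (g : 'I_n -> pt) : seq (R * pt) :=
  [seq (n%:R^-1, g i) | i <- enum 'I_n].

End Defs.

(** If [m] is the argmax of [c] in the simplex and [y] is one-hot at [j], the
    [m]-th coordinate of [c - pseudo_label c] costs [1 - c_m <= 1 - c_j =
    |c_j - y_j|], and any other coordinate [i] costs [c_i <= c_l] for some
    [l <> i], where one of [i], [l] is a zero of [y].  Hence pseudo-labelling is
    a transport map that is pointwise optimal against every one-hot target, and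
    integrating this bound against the first marginal of any coupling of
    [f_# P] with [P'] shows that the deterministic coupling
    [(c, pseudo_label c)] is no more costly. *)
From mathcomp Require Import all_boot all_order all_algebra.
From mathcomp Require Import boolp classical_sets reals.
Set Implicit Arguments. Unset Strict Implicit. Unset Printing Implicit Defensive.
Import Order.TTheory GRing.Theory Num.Theory.
Local Open Scope ring_scope.

Section PseudoLabel.
Variables (R : realType) (k : nat).
Implicit Types (c u y : 'rV[R]_k).

Lemma coord_le_supnorm u j : `|u ord0 j| <= supnorm u.
Proof. by rewrite /supnorm (bigD1 j) //= le_max lexx. Qed.

Lemma supnorm_le u L : 0 <= L -> (forall j, `|u ord0 j| <= L) -> supnorm u <= L.
Proof. by move=> L_ge0 u_le; apply: bigmax_le. Qed.

Lemma supnorm_ge0 u : 0 <= supnorm u.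
Proof. by rewrite /supnorm; elim/big_ind: _ => //= x y; rewrite le_max => ->. Qed.

Lemma simplex_coord_bounds c j : in_simplex c -> 0 <= c ord0 j <= 1.
Proof.
case=> c_ge0 c_sum; rewrite c_ge0 -c_sum (bigD1 j) //= lerDl.
exact: sumr_ge0.
Qed.

Lemma onehotP y : onehot y ->
  exists2 m, y ord0 m = 1 & forall i, i != m -> y ord0 i = 0.
Proof.
case=> y01 y_sum.
have y_ge0 j : 0 <= y ord0 j by case: (y01 j) => ->.
have [m ym] : exists m, y ord0 m = 1.
  apply/not_existsP => no1; move/eqP: y_sum; apply/negP.
  by rewrite big1 ?(eq_sym 0) ?oner_eq0 // => j _; case: (y01 j) => // /no1.
exists m => // i im.
have rest0 : \sum_(j < k | j != m) y ord0 j = 0.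
  by apply/(addrI 1); rewrite addr0 -[in RHS]y_sum [in RHS](bigD1 m) //= ym.
exact: (psumr_eq0P (fun j _ => y_ge0 j) rest0).
Qed.

Lemma not_argmax_dominated c i :
  ~~ is_argmax c i -> exists2 j, j != i & c ord0 i <= c ord0 j.
Proof.
rewrite negb_and => /orP [/forallPn [j]|/forallPn [j]].
- rewrite -ltNge => lt_ij; exists j; last exact: ltW.
  by apply: contraTneq lt_ij => ->; rewrite ltxx.
- rewrite negb_imply => /andP [lt_ji /negbTE not_lt]; exists j.
    by apply: contraTneq lt_ji => ->; rewrite ltnn.
  by rewrite leNgt not_lt.
Qed.

Lemma supnorm_sub_pseudo_label_le c y :
  (forall j, 0 <= c ord0 j <= 1) -> onehot y ->
  supnorm (c - pseudo_label c) <= supnorm (c - y).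
Proof.
move=> c01 /onehotP [m ym y_off].
have dist_le j : `|c ord0 j - y ord0 j| <= supnorm (c - y).
  by have := coord_le_supnorm (c - y) j; rewrite !mxE.
have off_le j : j != m -> c ord0 j <= supnorm (c - y).
  have /andP [c_ge0 _] := c01 j.
  by move=> jm; have := dist_le j; rewrite y_off // subr0 ger0_norm.
apply: supnorm_le => [|i]; first exact: supnorm_ge0.
have /andP [ci_ge0 ci_le1] := c01 i; rewrite !mxE.
case: ifP => [/andP [/forallP cm_le _]|/negbT /not_argmax_dominated [j ji cij]].
- have /andP [_ cm_le1] := c01 m.
  apply: le_trans (dist_le m); rewrite ym [X in X <= _]distrC [X in _ <= X]distrC.
  by rewrite !ger0_norm ?subr_ge0 // lerD2l lerN2.
- rewrite subr0 ger0_norm //; have [im|] := eqVneq i m; last exact: off_le.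
  by apply: le_trans cij (off_le j _); rewrite -im.
Qed.

End PseudoLabel.

Section DiscreteTransport.
Variable R : realType.

Definition pushforward {T U : Type} (h : T -> U) (P : seq (R * T)) :
  seq (R * U) := [seq (b.1, h b.2) | b <- P].

Lemma big_regroup (I T : eqType) (r : seq I) (w : I -> R) (p : I -> T)
    (G : T -> R) (S : seq T) :
  uniq S -> {in r, forall i, p i \in S} ->
  \sum_(i <- r) w i * G (p i) = \sum_(z <- S) (\sum_(i <- r | p i == z) w i) * G z.
Proof.
move=> S_uniq p_in.
under [RHS]eq_bigr => z _ do rewrite mulr_suml big_mkcond /=.
rewrite exchange_big /= big_seq [RHS]big_seq; apply: eq_bigr => i ir.
rewrite -big_mkcond /= (eq_bigr (fun z => w i * G z)); last by move=> z /eqP <-.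
rewrite -big_filter (@eq_filter _ _ (pred1 (p i))) => [|z]; last exact: eq_sym.
by rewrite filter_pred1_uniq ?p_in // big_seq1.
Qed.
Arguments big_regroup {I T r} w p G {S}.

Lemma sum_marginal (T U : eqType) (P : seq (R * T)) (pi : seq (R * U))
    (p : U -> T) (G : T -> R) :
  (forall z, \sum_(a <- pi | p a.2 == z) a.1 = mass P z) ->
  \sum_(a <- pi) a.1 * G (p a.2) = \sum_(b <- P) b.1 * G b.2.
Proof.
move=> marg; set S := undup ([seq p a.2 | a <- pi] ++ [seq b.2 | b <- P]).
have S_uniq : uniq S by exact: undup_uniq.
rewrite (big_regroup (fun a => a.1) (fun a => p a.2) G S_uniq); last first.
  by move=> a api; rewrite mem_undup mem_cat map_f.
rewrite (big_regroup (fun b => b.1) (fun b => b.2) G S_uniq); last first.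
  by move=> b bP; rewrite mem_undup mem_cat orbC map_f.
by apply: eq_bigr => z _; rewrite marg.
Qed.

Lemma mass_neq0_mem (T : eqType) (L : seq (R * T)) z :
  mass L z != 0 -> z \in [seq a.2 | a <- L].
Proof.
apply: contraR => zL; rewrite /mass big_seq_cond big1 // => a /andP [aL /eqP az].
by rewrite -az map_f in zL.
Qed.

Variable k : nat.
Implicit Types (P Q : seq (R * 'rV[R]_k)) (pi : seq (R * ('rV[R]_k * 'rV[R]_k))).

Lemma coupling_supp P Q pi a : coupling P Q pi -> a \in pi -> a.1 != 0 ->
  mass P a.2.1 != 0 /\ mass Q a.2.2 != 0.
Proof.
move=> [pi_ge0 [pi1 pi2]] api a_neq0.
have sub_neq0 (q : R * ('rV[R]_k * 'rV[R]_k) -> 'rV[R]_k) :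
    \sum_(b <- pi | q b == q a) b.1 != 0.
  rewrite big_seq_cond psumr_neq0 => [|b /andP [bpi _]]; last exact: pi_ge0.
  by apply/hasP; exists a; rewrite // api eqxx lt_def a_neq0 pi_ge0.
rewrite -pi1 -pi2; split; first exact: (sub_neq0 (fun b => b.2.1)).
exact: (sub_neq0 (fun b => b.2.2)).
Qed.

Lemma cost_ge0 P Q pi : coupling P Q pi -> 0 <= cost pi.
Proof.
case=> pi_ge0 _; rewrite /cost big_seq; apply: sumr_ge0 => a api.
by apply: mulr_ge0; [exact: pi_ge0 | exact: supnorm_ge0].
Qed.

Lemma prod_coupling P Q : is_prob P -> is_prob Q ->
  coupling P Q [seq (b.1 * a.1, (b.2, a.2)) | b <- P, a <- Q].
Proof.
move=> [P_ge0 P_sum] [Q_ge0 Q_sum]; split; last split.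
- move=> x /allpairsP [[b a] [/= bP aQ ->]].
  by apply: mulr_ge0; [exact: P_ge0 | exact: Q_ge0].
- move=> z; rewrite big_mkcond big_allpairs_dep /= /mass [RHS]big_mkcond /=.
  apply: eq_bigr => b _; case: ifP => _; last by rewrite big1.
  by rewrite -mulr_sumr Q_sum mulr1.
- move=> z; rewrite big_mkcond big_allpairs_dep /= /mass.
  rewrite (eq_bigr (fun b => b.1 * \sum_(a <- Q) (if a.2 == z then a.1 else 0))).
    by rewrite -mulr_suml P_sum mul1r -big_mkcond.
  move=> b _; rewrite mulr_sumr; apply: eq_bigr => a _.
  by case: ifP; rewrite ?mulr0.
Qed.

Lemma graph_coupling P (h : 'rV[R]_k -> 'rV[R]_k) :
  (forall b, b \in P -> 0 <= b.1) ->
  coupling P (pushforward h P) [seq (b.1, (b.2, h b.2)) | b <- P].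
Proof.
move=> P_ge0; split; first by move=> a /mapP [b bP ->]; exact: P_ge0.
by split=> z; rewrite /mass /pushforward !big_map.
Qed.

Lemma Winf_le_cost P Q pi : coupling P Q pi -> Winf P Q <= cost pi.
Proof.
move=> cpl; apply: ge_inf; last by exists pi.
by exists 0 => _ [pi' [cpl' ->]]; exact: cost_ge0 cpl'.
Qed.

Lemma Winf_ge P Q m : is_prob P -> is_prob Q ->
  (forall pi, coupling P Q pi -> m <= cost pi) -> m <= Winf P Q.
Proof.
move=> PP PQ m_le; apply: lb_le_inf; last by move=> _ [pi [cpl ->]]; exact: m_le.
set pi := [seq (b.1 * a.1, (b.2, a.2)) | b <- P, a <- Q].
by exists (cost pi), pi; split; first exact: prod_coupling.
Qed.

(* The graph coupling of [h] costs [int ||z - h z|| dP], the integral of a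
   pointwise lower bound of any coupling's cost against its first marginal. *)
Lemma Winf_pushforward_le P Q (h : 'rV[R]_k -> 'rV[R]_k) :
  is_prob P -> is_prob Q ->
  (forall z y, mass P z != 0 -> mass Q y != 0 ->
     supnorm (z - h z) <= supnorm (z - y)) ->
  Winf P (pushforward h P) <= Winf P Q.
Proof.
move=> PP PQ h_opt.
have [P_ge0 _] := PP.
apply: le_trans (Winf_le_cost (graph_coupling h P_ge0)) _.
rewrite /cost big_map /=; apply: Winf_ge PP PQ _ => pi cpl.
have [pi_ge0 [pi1 _]] := cpl.
rewrite -(sum_marginal (fun z => supnorm (z - h z)) pi1) /cost.
rewrite big_seq [X in _ <= X]big_seq.
apply: ler_sum => a api; have [a0|a_neq0] := eqVneq a.1 0; first by rewrite a0 !mul0r.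
have [Pa Qa] := coupling_supp cpl api a_neq0.
by apply: ler_wpM2l; [exact: pi_ge0 | exact: h_opt].
Qed.

End DiscreteTransport.

Section Empirical.
Variables (R : realType) (k n : nat) (g : 'I_n -> 'rV[R]_k).

Lemma empirical_is_prob : (0 < n)%N -> is_prob (empirical g).
Proof.
move=> n_gt0; split; first by move=> a /mapP [i _ ->]; rewrite invr_ge0.
rewrite big_map big_enum /= sumr_const card_ord -[_ *+ n]mulr_natr.
by rewrite mulVf // pnatr_eq0 -lt0n.
Qed.

Lemma empirical_comp (h : 'rV[R]_k -> 'rV[R]_k) :
  empirical (fun i => h (g i)) = pushforward h (empirical g).
Proof. by rewrite /pushforward /empirical -[RHS]map_comp. Qed.

Lemma mass_empirical_neq0 z : mass (empirical g) z != 0 -> exists i, z = g i.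
Proof. by move=> /mass_neq0_mem; rewrite -map_comp => /mapP [i _ ->]; exists i. Qed.

End Empirical.

Theorem mainTheorem2 (R : realType) (k n : nat) (X : Type)
  (f : X -> 'rV[R]_k) (hf : forall x, in_simplex (f x))
  (xs : 'I_n -> X) (hn : (0 < n)%N)
  (P' : seq (R * 'rV[R]_k)) (hP' : is_prob P')
  (hsupp : forall z, ~ onehot z -> mass P' z = 0) :
  Winf (empirical (fun i => f (xs i))) P' >=
  Winf (empirical (fun i => f (xs i)))
       (empirical (fun i => pseudo_label (f (xs i)))).
Proof.
rewrite (empirical_comp (fun i => f (xs i)) (@pseudo_label R k)).
apply: Winf_pushforward_le => [|//|z y /mass_empirical_neq0 [i ->] Py].
  exact: empirical_is_prob.
apply: supnorm_sub_pseudo_label_le => [j|]; first exact: simplex_coord_bounds.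
by have [//|/hsupp y0] := pselect (onehot y); rewrite y0 eqxx in Py.
Qed.
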